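(* Let $\mathcal T$ be an $n$-leaf tree ($n\ge 3$) with leaves $N=\{1,\dots,n\}$ and internal edges $I_1,\dots,I_{n-3}$, and let $\mathbf M$ be its $n\times(2n-3)$ Shapley transformation matrix. Then the null space of $\mathbf M$ has dimension $n-3$. A basis of it is given by the vectors $w_{I_1},\dots,w_{I_{n-3}}\in\mathbb R^{2n-3}$, one for each internal edge, with coordinates $$(w_{I_k})_i=\begin{cases}-\dfrac{f(i,I_k)-1}{(n-2)\,c(i,I_k)} & \text{if } 1\le i\le n,\\[2mm] 1 & \text{if } i=n+k,\\ 0 & \text{otherwise,}\end{cases}$$ for $k\in\{1,\dots,n-3\}$. Here the first $n$ coordinates correspond to the leaf edges and coordinate $n+j$ corresponds to the internal edge $I_j$.
   Context: An $n$-leaf tree here is an unrooted tree whose leaves are labeled by $N=\{1,\dots,n\}$ and whose internal vertices all have degree 3. Such a tree has $2n-3$ edges: the $n$ leaf edges (leaf edge $i$ is incident to leaf $i$) and the $n-3$ internal edges $I_1,\dots,I_{n-3}$. Split counts: for a leaf $i$ and an edge $k$, removing $k$ splits the tree into two subtrees. $c(i,k)$ is the number of leaves in the subtree containing $i$, and $f(i,k)=n-c(i,k)$ is the number of leaves in the other subtree. The Shapley transformation matrix $\mathbf M$ is the $n\times(2n-3)$ matrix with entries $\mathbf M[i,k]=\dfrac{f(i,k)}{n\,c(i,k)}$. Its rows are indexed by leaves $i$ and its columns by edges $k$, in the order leaf edges $1,\dots,n$ then $I_1,\dots,I_{n-3}$. Equivalently, $\mathbf M$ is the matrix such that the Shapley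 value of the tree game equals $\mathbf M$ times the vector of edge weights. The tree game assigns to a set of leaves $S$ the total weight of the minimal subtree spanning $S$. *)

From mathcomp Require Import all_boot all_order all_algebra.
Set Implicit Arguments. Unset Strict Implicit. Unset Printing Implicit Defensive.
Import Order.TTheory GRing.Theory Num.Theory.
Local Open Scope ring_scope.

(* n-leaf trees.  Vertices are 'I_(n + (n-2)): vertex (lshift i) for i : 'I_n *)
(* is the leaf labelled i+1 (the paper's leaf i+1), the remaining n-2        *)
(* vertices (value >= n) are the internal vertices.  The tree is given by a  *)

Definition vert (n : nat) := 'I_(n + (n - 2)).

Definition leafv (n : nat) (i : 'I_n) : vert n := lshift (n - 2) i.

(* e is an n-leaf tree whose leaves are exactly the vertices < n and whose
   internal vertices all have degree 3: connected, |E| = |V| - 1 (so acyclic),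
   leaves of degree 1, internal vertices of degree 3. *)
Definition is_nleaf_tree (n : nat) (e : rel (vert n)) : Prop :=
  [/\ symmetric e, irreflexive e,
      (forall x y : vert n, connect e x y),
      #|[set p : vert n * vert n | e p.1 p.2]| = (2 * (n + (n - 2) - 1))%N
    & (forall v : vert n, #|[set w | e v w]| = if (v < n)%N then 1%N else 3%N)].

(* An edge is represented by an (oriented) pair of its endpoints. *)
Definition del_edge (n : nat) (e : rel (vert n)) (uv : vert n * vert n)
  : rel (vert n) :=
  fun x y => e x y && ~~ (((x == uv.1) && (y == uv.2)) || ((x == uv.2) && (y == uv.1))).

Definition split_c (n : nat) (e : rel (vert n)) (uv : vert n * vert n) (i : 'I_n)
  : nat :=
  #|[set l : 'I_n | connect (del_edge e uv) (leafv i) (leafv l)]|.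

Definition split_f (n : nat) (e : rel (vert n)) (uv : vert n * vert n) (i : 'I_n)
  : nat := (n - split_c e uv i)%N.

Definition leaf_edge (n : nat) (e : rel (vert n)) (i : 'I_n) : vert n * vert n :=
  (leafv i, odflt (leafv i) [pick w | e (leafv i) w]).

(* lab : 'I_(n-3) -> edges enumerates the internal edges I_1,...,I_{n-3}
   (lab k is I_{k+1}): each lab k is an edge between two internal vertices,
   distinct k give distinct (unordered) edges, and every internal edge occurs. *)
Definition is_internal_labeling (n : nat) (e : rel (vert n))
  (lab : 'I_(n - 3) -> vert n * vert n) : Prop :=
  [/\ (forall k, [&& e (lab k).1 (lab k).2, (n <= (lab k).1)%N & (n <= (lab k).2)%N]),
      (forall k k', (lab k == lab k') || (lab k == ((lab k').2, (lab k').1)) -> k = k')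
    & (forall u v : vert n, e u v -> (n <= u)%N -> (n <= v)%N ->
         exists k, lab k = (u, v) \/ lab k = (v, u))].

Definition col_edge (n : nat) (e : rel (vert n)) (lab : 'I_(n - 3) -> vert n * vert n)
  (j : 'I_(n + (n - 3))) : vert n * vert n :=
  match split j with
  | inl i => leaf_edge e i
  | inr k => lab k
  end.

Definition shapley_matrix (R : fieldType) (n : nat) (e : rel (vert n))
  (lab : 'I_(n - 3) -> vert n * vert n) : 'M[R]_(n, n + (n - 3)) :=
  \matrix_(i < n, j < n + (n - 3))
     ((split_f e (col_edge e lab j) i)%:R
        / (n%:R * (split_c e (col_edge e lab j) i)%:R)).

(* Row k of this matrix is the vector w_{I_{k+1}}. *)
Definition null_basis (R : fieldType) (n : nat) (e : rel (vert n))
  (lab : 'I_(n - 3) -> vert n * vert n) : 'M[R]_(n - 3, n + (n - 3)) :=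
  \matrix_(k < n - 3, j < n + (n - 3))
     match split j with
     | inl i => - (((split_f e (lab k) i)%:R - 1)
                   / ((n - 2)%:R * (split_c e (lab k) i)%:R))
     | inr k' => if k' == k then 1 else 0
     end.

(* Null space of M : 'M_(m, p) = { x in R^p | M x = 0 }, represented (as usual
   in mxalgebra) by the row space of a matrix of row vectors: x^T with
   x^T *m M^T = 0. *)
Definition nullspace (R : fieldType) (m p : nat) (M : 'M[R]_(m, p)) : 'M[R]_p :=
  kermx M^T.

From mathcomp Require Import all_boot all_order all_algebra.
From mathcomp Require Import ring lra zify.
Set Implicit Arguments. Unset Strict Implicit. Unset Printing Implicit Defensive.
Import GRing.Theory Num.Theory.

(* Deleting an edge uv of the tree leaves exactly two components: a connected set of k
   vertices spans at least k - 1 edges, and T - uv has one edge too few to be connected.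
   Each component contains a leaf, since a set X of internal (degree 3) vertices would
   send 3 |X| arcs out of its vertices while only 2 (|X| - 1) + 2 are available.  Hence
   the column of M and the coordinates of w for an edge take one value on the leaves
   of each side, and w_k . M_i = 0 reduces to a rational identity in the two side sizes.
   The leaf-edge block of M is (d - o) I + o J, where d = (n - 1) / n and
   o = 1 / (n (n - 1)) satisfy d + (n - 1) o = 1 and d <> o, hence invertible, so M
   has rank n and its null space dimension n - 3; the w_k lie in it and are independent
   because their internal-edge coordinates form the identity. *)

Definition arcs_from (T : finType) (H : rel T) (X : {set T}) : {set T * T} :=
  [set p | (p.1 \in X) && H p.1 p.2].

Lemma card_arcs_from (T : finType) (H : rel T) (X : {set T}) :
  #|arcs_from H X| = (\sum_(w in X) #|[set y | H w y]|)%N.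
Proof.
rewrite -sum1_card big_mkcond /=.
rewrite (eq_bigr (fun p : T * T => ((p.1, p.2) \in arcs_from H X : nat))); last by case.
rewrite -(pair_bigA _ (fun a b => ((a, b) \in arcs_from H X : nat))) /=.
rewrite [RHS]big_mkcond; apply: eq_bigr => w _; rewrite -sum1_card.
case: (boolP (w \in X)) => wX; last by rewrite big1 // => y _; rewrite !inE (negbTE wX).
by rewrite [RHS]big_mkcond; apply: eq_bigr => y _; rewrite !inE /= wX.
Qed.

Lemma card_setC_ord n (A : {set 'I_n}) : #|~: A| = (n - #|A|)%N.
Proof. by have := cardsC A; rewrite card_ord; move: #|A| #|~: A| => a b; lia. Qed.

Section SpanningArcs.
Variables (T : finType) (H : rel T) (r : T).
Hypothesis Hsym : symmetric H.

Fixpoint ball k : {set T} :=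
  if k is k'.+1 then ball k' :|: [set w | [exists x in ball k', H x w]] else [set r].

Lemma ball_path p x k : x \in ball k -> path H x p -> last x p \in ball (k + size p).
Proof.
elim: p x k => [|y p IHp] x k /=; first by rewrite addn0.
move=> xk /andP[Hxy Hp]; rewrite -addSnnS; apply: IHp Hp.
by rewrite /= !inE; apply/orP; right; apply/existsP; exists x; rewrite xk.
Qed.

Lemma ball_or_disconnected w : exists k, (w \in ball k) || ~~ connect H r w.
Proof.
case: (boolP (connect H r w)) => [/connectP[p Hp ->]|_]; last by exists 0%N; rewrite /= orbT.
by exists (0 + size p)%N; rewrite (@ball_path p r 0 (set11 r) Hp).
Qed.

Definition dist w := ex_minn (ball_or_disconnected w).

Definition parent w := odflt r [pick x | H x w && (dist x < dist w)%N].

(* A vertex first reached at radius m+1 has a neighbour at radius m. *)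
Lemma parentP w : connect H r w -> w != r -> H (parent w) w && (dist (parent w) < dist w)%N.
Proof.
move=> rw wr; rewrite /parent; case: pickP => [x -> //| none]; exfalso.
move: none; rewrite {2}/dist; case: (ex_minnP (ball_or_disconnected w)) => m.
rewrite rw orbF; case: m => [|m]; first by rewrite inE (negbTE wr).
rewrite /= inE => /orP[wm min_m|]; first by have := min_m m; rewrite wm ltnn => /(_ isT).
rewrite inE => /existsP[x /andP[xm Hxw]] _ /(_ x); rewrite Hxw /=.
rewrite /dist; case: (ex_minnP (ball_or_disconnected x)) => m' _ min_m'.
by rewrite ltnS min_m' // xm.
Qed.

(* The arcs (w, parent w) and (parent w, w) for w <> r are 2 (|X| - 1) distinct arcs. *)
Lemma card_arcs_from_connect :
  (2 * (#|[set w | connect H r w]| - 1) <= #|arcs_from H [set w | connect H r w]|)%N.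
Proof.
set X := [set w | connect H r w]; set Y := X :\ r.
have cardY : #|Y| = (#|X| - 1)%N by rewrite (cardsD1 r X) inE connect0 add1n subSS subn0.
have inY w : w \in Y -> connect H r w /\ w != r by rewrite !inE => /andP[-> ->].
set up := [set (w, parent w) | w in Y]; set down := [set (parent w, w) | w in Y].
have card_up : #|up| = #|Y| by apply: card_imset => a b [].
have card_down : #|down| = #|Y| by apply: card_imset => a b [].
have up_down : up :&: down = set0.
  apply/setP=> p; rewrite inE in_set0.
  apply/negP => /andP[/imsetP[w /inY[rw wr] ->] /imsetP[w' /inY[rw' w'r] [e1 e2]]].
  have /andP[_] := parentP rw wr; have /andP[_] := parentP rw' w'r.
  by rewrite -e1 e2; lia.
have : up :|: down \subset arcs_from H X.
  apply/subsetP => p /setUP[] /imsetP[w /inY[rw wr] ->];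
    have /andP[Hpw _] := parentP rw wr; rewrite !inE /=.
    by rewrite rw Hsym.
  by rewrite Hpw (connect_trans rw) // connect1 // Hsym.
by move/subset_leq_card; rewrite cardsU up_down cards0 card_up card_down cardY subn0 addnn -mul2n.
Qed.

End SpanningArcs.

Lemma del_edge_sym n (e : rel (vert n)) uv : symmetric e -> symmetric (del_edge e uv).
Proof.
move=> esym x y; rewrite /del_edge esym; congr (_ && ~~ _).
by case: (x == _); case: (y == _); case: (x == _); case: (y == _).
Qed.

Lemma del_edge_swap n (e : rel (vert n)) u v : del_edge e (v, u) =2 del_edge e (u, v).
Proof.
move=> x y; rewrite /del_edge /=; congr (_ && ~~ _).
by case: (x == _); case: (y == _); case: (x == _); case: (y == _).
Qed.

Section TreeEdge.
Variables (n : nat) (e : rel (vert n)) (u v : vert n).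
Hypotheses (tree : is_nleaf_tree e) (euv : e u v).

Local Notation e' := (del_edge e (u, v)).
Local Notation side x := [set w | connect e' x w].
Local Notation arcs H := [set p : vert n * vert n | H p.1 p.2].

Let esym : symmetric e. Proof. by case: tree. Qed.
Let e'sym : symmetric e'. Proof. exact: del_edge_sym. Qed.
Let e'conn : connect_sym e'. Proof. exact: sym_connect_sym. Qed.

Lemma tree_edge_neq : u != v.
Proof. by case: tree => _ irr _ _ _; apply: contraTneq euv => ->; rewrite irr. Qed.

Lemma card_arcs_del_edge : (#|arcs e'| + 2 <= #|arcs e|)%N.
Proof.
have : arcs e' \subset arcs e :\ (u, v) :\ (v, u).
  apply/subsetP => -[x y]; rewrite !inE /= /del_edge => /andP[-> ]; rewrite andbT.
  by rewrite !xpair_eqE negb_or andbC.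
move/subset_leq_card; rewrite (cardsD1 (u, v) (arcs e)) (cardsD1 (v, u) (arcs e :\ (u, v))).
rewrite !inE /= euv esym euv xpair_eqE andbT.
by have /negbTE-> := tree_edge_neq; rewrite andbF; lia.
Qed.

Lemma card_arcs_from_del_edge X : (#|arcs_from e X| <= #|arcs_from e' X| + 2)%N.
Proof.
have : arcs_from e X \subset arcs_from e' X :|: [set (u, v); (v, u)].
  apply/subsetP => -[x y]; rewrite !inE /= /del_edge => /andP[-> ->] /=.
  by case: (x =P u); case: (y =P v); case: (x =P v); case: (y =P u) => //= *;
    subst; rewrite ?eqxx ?orbT.
move/subset_leq_card; rewrite cardsU; have := cards2 (u, v) (v, u).
by case: (_ != _) => /= ->; lia.
Qed.

Lemma side_cover w : (w \in side u) || (w \in side v).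
Proof.
have closedUV : closed e (side u :|: side v).
  suff imp x y : e x y -> x \in side u :|: side v -> y \in side u :|: side v.
    by move=> x y exy; apply/idP/idP; apply: imp; rewrite // esym.
  move=> exy; case: (boolP (e' x y)) => [e'xy | ].
    by rewrite !inE => /orP[] c; apply/orP; [left|right]; apply: connect_trans c (connect1 e'xy).
  by rewrite /del_edge exy negbK => /orP[] /andP[_ /eqP ->]; rewrite !inE connect0 ?orbT.
case: tree => _ _ conn _ _; have := closed_connect closedUV (conn u w).
by rewrite !inE connect0 => <-.
Qed.

(* Otherwise e' would connect all vertices with two arcs fewer than a spanning tree needs. *)
Lemma del_edge_disconnects : v \notin side u.
Proof.
apply/negP; rewrite inE => uv.
have sideT : side u = setT.
  apply/setP => w; rewrite !inE; have /orP[|] := side_cover w; rewrite !inE //.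
  exact: connect_trans uv.
have := card_arcs_from_connect u e'sym.
have : (#|arcs_from e' (side u)| <= #|arcs e'|)%N.
  by apply/subset_leq_card/subsetP => p; rewrite !inE => /andP[].
have := card_arcs_del_edge.
by rewrite sideT cardsT card_ord; case: tree => _ _ _ -> _; lia.
Qed.

Lemma side_v : side v = ~: side u.
Proof.
apply/setP => w; have := side_cover w; rewrite !inE.
case: (boolP (connect e' u w)) => [uw _ | _ /= -> //]; apply/negP => vw.
by move: del_edge_disconnects; rewrite inE (connect_trans uw) // e'conn.
Qed.

Lemma card_arcs_from_side : (#|arcs_from e' (side u)| <= 2 * (#|side u| - 1))%N.
Proof.
have disj : arcs_from e' (side u) :&: arcs_from e' (side v) = set0.
  apply/setP => p; rewrite side_v !inE.
  by case: (connect e' u p.1); rewrite ?andbF.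
have : (#|arcs_from e' (side u)| + #|arcs_from e' (side v)| <= #|arcs e'|)%N.
  rewrite -cardsUI disj cards0 addn0.
  by apply/subset_leq_card/subsetP => p; rewrite !inE => /orP[] /andP[].
have := card_arcs_from_connect v e'sym; have := card_arcs_del_edge.
have := cardsC (side u); rewrite -side_v.
have : (0 < #|side v|)%N by apply/card_gt0P; exists v; rewrite inE connect0.
by case: tree => _ _ _ -> _; rewrite card_ord; lia.
Qed.

Lemma side_has_leaf : exists2 w, w \in side u & (w < n)%N.
Proof.
case: (boolP [exists w in side u, (w < n)%N]) => [/exists_inP // | /exists_inP noleaf].
have := card_arcs_from_del_edge (side u); have := card_arcs_from_side.
rewrite (card_arcs_from e) (eq_bigr (fun _ => 3%N)); last first.
  move=> w wu; case: tree => _ _ _ _ ->.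
  by case: ifP => // wn; case: noleaf; exists w.
rewrite sum_nat_const.
have : (0 < #|side u|)%N by apply/card_gt0P; exists u; rewrite inE connect0.
by move: (#|arcs_from _ _|) (#|side u|) => k m; lia.
Qed.

Local Notation leaves := [set l : 'I_n | connect e' u (leafv l)].

Lemma split_c_tree_edge l :
  split_c e (u, v) l = if l \in leaves then #|leaves| else (n - #|leaves|)%N.
Proof.
rewrite /split_c; case: (boolP (l \in leaves)) => [|]; rewrite inE => ul.
  apply: eq_card => l'; rewrite !inE.
  apply/idP/idP => [|ul']; first exact: connect_trans ul.
  by apply: connect_trans ul'; rewrite e'conn.
rewrite -card_setC_ord.
have : leafv l \in side v by rewrite side_v !inE.
rewrite inE => vl; apply: eq_card => l'.
have -> : (l' \in ~: leaves) = (leafv l' \in side v) by rewrite side_v !inE.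
rewrite !inE.
apply/idP/idP => [|vl']; first exact: connect_trans vl.
by apply: connect_trans vl'; rewrite e'conn.
Qed.

Lemma card_leaves_gt0 : (0 < #|leaves|)%N.
Proof.
have [w uw wn] := side_has_leaf; apply/card_gt0P; exists (Ordinal wn).
by rewrite inE; rewrite inE in uw; congr (connect _ _ _): uw; apply: val_inj.
Qed.

Lemma leaves_pendant i : u = leafv i -> leaves = [set i].
Proof.
move=> ui; apply/setP => l; rewrite !inE; apply/idP/idP; last first.
  by move/eqP ->; rewrite ui connect0.
have isolated y : ~~ e' u y.
  rewrite /del_edge /= negb_and negbK eqxx /=; apply/orP; case: (boolP (e u y)) => uy; [right|by left].
  have : y \in [set y | e u y] by rewrite inE.
  have : v \in [set y | e u y] by rewrite inE.
  case: tree => _ _ _ _ /(_ u); rewrite ui /= ltn_ord -ui => /eqP/cards1P[z ->].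
  by rewrite !inE => /eqP vz /eqP yz; rewrite yz vz eqxx.
case/connectP => -[|y p] /=; last by rewrite (negbTE (isolated y)).
by move=> _; rewrite ui => /lshift_inj ->.
Qed.

End TreeEdge.

Lemma tree_edge_split n (e : rel (vert n)) u v : is_nleaf_tree e -> e u v ->
  exists A : {set 'I_n}, [/\ (0 < #|A|)%N, (#|A| < n)%N
    & forall l, split_c e (u, v) l = if l \in A then #|A| else (n - #|A|)%N].
Proof.
move=> tree euv; have esym : symmetric e by case: tree.
set A := [set l : 'I_n | connect (del_edge e (u, v)) u (leafv l)].
exists A; split; [exact: card_leaves_gt0 | | exact: split_c_tree_edge].
have evu : e v u by rewrite esym.
have /card_gt0P[l] := card_leaves_gt0 tree evu; rewrite inE => vl.
have lA : l \notin A.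
  rewrite inE; apply/negP => ul; have := del_edge_disconnects tree euv.
  rewrite inE (connect_trans ul) //.
  rewrite (eq_connect (del_edge_swap e u v)) in vl.
  by rewrite (sym_connect_sym (del_edge_sym _ esym)).
have : (0 < #|~: A|)%N by apply/card_gt0P; exists l; rewrite inE.
by rewrite card_setC_ord; lia.
Qed.

Lemma split_c_leaf_edge n (e : rel (vert n)) l i : is_nleaf_tree e ->
  split_c e (leaf_edge e l) i = if i == l then 1%N else (n - 1)%N.
Proof.
move=> tree; rewrite /leaf_edge; case: pickP => [w ew | none]; last first.
  case: tree => _ _ _ _ /(_ (leafv l)); rewrite /= ltn_ord => /eqP/cards1P[z].
  by move/setP/(_ z); rewrite !inE none eqxx.
by rewrite (split_c_tree_edge tree ew) (leaves_pendant tree ew (erefl _)) cards1 inE; case: (i == l).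
Qed.

Local Open Scope ring_scope.

Lemma row_free_lsubmx (F : fieldType) m p q (A : 'M[F]_(m, p + q)) :
  row_free (lsubmx A) -> row_free A.
Proof.
move=> free_l; rewrite /row_free eqn_leq rank_leq_row /= -{1}(eqP free_l).
have -> : lsubmx A = A *m col_mx 1%:M 0 by rewrite -{2}[A]hsubmxK mul_row_col mulmx1 mulmx0 addr0.
exact: mxrankM_maxl.
Qed.

Lemma row_free_rsubmx (F : fieldType) m p q (A : 'M[F]_(m, p + q)) :
  row_free (rsubmx A) -> row_free A.
Proof.
move=> free_r; rewrite /row_free eqn_leq rank_leq_row /= -{1}(eqP free_r).
have -> : rsubmx A = A *m col_mx 0 1%:M by rewrite -{2}[A]hsubmxK mul_row_col mulmx1 mulmx0 add0r.
exact: mxrankM_maxl.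
Qed.

(* (p I + q J)^-1 = p^-1 I - q / (p (p + n q)) J, using J * J = n J. *)
Lemma scalar_add_const_unitmx (F : fieldType) n (p q : F) :
  p != 0 -> p + n%:R * q != 0 -> p%:M + q *: const_mx 1 \in @unitmx F n.
Proof.
move=> p0 pq0; set J : 'M[F]_n := const_mx 1.
have JJ : J *m J = n%:R *: J.
  apply/matrixP => i j; rewrite !mxE (eq_bigr (fun _ => 1)) => [|k _]; last by rewrite !mxE mulr1.
  by rewrite sumr_const card_ord mulr1.
set c := q / (p * (p + n%:R * q)).
suff /mulmx1_unit[] : (p%:M + q *: J) *m (p^-1%:M - c *: J) = 1%:M by [].
rewrite mulmxDl mul_scalar_mx -scalemxAl mulmxBr mul_mx_scalar -scalemxAr JJ.
rewrite !scalerBr scale_scalar_mx mulfV // !scalerA -scalerBl -scaleNr -addrA -scalerDl.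
suff -> : - (p * c) + (q / p - q * c * n%:R) = 0 by rewrite scale0r addr0.
by rewrite /c; field; apply/andP.
Qed.

(* The leaf-edge columns of M: c = 1, f = n - 1 on the diagonal, c = n - 1, f = 1 off it.
   null_coef n a b is the leaf coordinate of w for a leaf with c = a and f = b. *)
Definition leaf_diag (R : fieldType) n : R := (n - 1)%N%:R / n%:R.
Definition leaf_offdiag (R : fieldType) n : R := 1 / (n%:R * (n - 1)%N%:R).
Definition null_coef (R : fieldType) (n a b : nat) : R := - ((b%:R - 1) / ((n - 2)%N%:R * a%:R)).

Section ShapleyEntries.
Variables (R : fieldType) (n : nat) (e : rel (vert n)) (lab : 'I_(n - 3) -> vert n * vert n).
Hypothesis tree : is_nleaf_tree e.

Local Notation M := (shapley_matrix R e lab).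
Local Notation W := (null_basis R e lab).

Lemma shapley_matrix_leaf i l : M i (lshift _ l) = if i == l then leaf_diag R n else leaf_offdiag R n.
Proof.
rewrite mxE /col_edge (unsplitK (inl _ l)) /split_f split_c_leaf_edge //.
by case: (i == l); rewrite ?subKn ?mulr1 // (leq_trans _ (ltn_ord l)).
Qed.

Lemma shapley_matrix_internal i k :
  M i (rshift _ k) = (n - split_c e (lab k) i)%N%:R / (n%:R * (split_c e (lab k) i)%:R).
Proof. by rewrite mxE /col_edge (unsplitK (inr _ k)). Qed.

Lemma null_basis_leaf k l :
  W k (lshift _ l) = null_coef R n (split_c e (lab k) l) (n - split_c e (lab k) l).
Proof. by rewrite mxE (unsplitK (inl _ l)). Qed.

Lemma null_basis_internal k k' : W k (rshift _ k') = (k' == k)%:R.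
Proof. by rewrite mxE (unsplitK (inr _ k')); case: (k' == k). Qed.

Lemma lsubmx_shapley_matrix :
  lsubmx M = (leaf_diag R n - leaf_offdiag R n)%:M + leaf_offdiag R n *: const_mx 1.
Proof.
apply/matrixP => i j; rewrite [LHS]mxE shapley_matrix_leaf !mxE mulr1.
by case: (i == j); rewrite /= ?mulr1n ?mulr0n ?add0r // subrK.
Qed.

Lemma rsubmx_null_basis : rsubmx W = 1%:M.
Proof. by apply/matrixP => k k'; rewrite mxE null_basis_internal mxE eq_sym. Qed.

End ShapleyEntries.

Lemma sumr_diag_offdiag (R : ringType) n (g : 'I_n -> R) (x y : R) i :
  \sum_l g l * (if i == l then x else y) = (\sum_l g l) * y + g i * (x - y).
Proof.
rewrite (bigD1 i) //= eqxx mulr_suml [in RHS](bigD1 i) //= mulrBr.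
rewrite (eq_bigr (fun l => g l * y)) => [|l /negbTE il]; last by rewrite eq_sym il.
by rewrite addrAC [g i * y + _]addrC subrK.
Qed.

Lemma sumr_two_valued (R : ringType) n (A : {set 'I_n}) (x y : R) :
  \sum_l (if l \in A then x else y) = x *+ #|A| + y *+ (n - #|A|).
Proof.
rewrite (bigID (mem A)) /= (eq_bigr (fun _ => x)) => [|l ->//].
rewrite [X in _ + X](eq_bigr (fun _ => y)) => [|l /negbTE->//].
rewrite !sumr_const; congr (_ *+ _ + _ *+ _).
by rewrite -card_setC_ord; apply: eq_card => l; rewrite !inE.
Qed.

(* The product of w_k with row i of M, for a leaf i on the side with a leaves: the last
   summand is M[i, I_k] = f / (n c) with c = a and f = b. *)
Lemma null_coef_balance (R : realFieldType) (n a b : nat) :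
  (0 < a)%N -> (0 < b)%N -> (a + b)%N = n -> (3 <= n)%N ->
  (null_coef R n a b *+ a + null_coef R n b a *+ b) * leaf_offdiag R n
    + null_coef R n a b * (leaf_diag R n - leaf_offdiag R n) + b%:R / (n%:R * a%:R) = 0.
Proof.
move=> a0 b0 <- n3; rewrite -!(mulr_natr (null_coef _ _ _ _)) /null_coef /leaf_diag /leaf_offdiag.
have ha : 1 <= a%:R :> R by rewrite ler1n.
have hb : 1 <= b%:R :> R by rewrite ler1n.
have hn : 3 <= a%:R + b%:R :> R by rewrite -natrD (ler_nat R 3).
rewrite !natrB ?natrD; try lia.
by field; rewrite !lt0r_neq0 //; lra.
Qed.

Lemma leaf_block_row_sum (R : realFieldType) n : (3 <= n)%N ->
  (leaf_diag R n - leaf_offdiag R n) + n%:R * leaf_offdiag R n = 1.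
Proof.
move=> n3; have hn : 3 <= n%:R :> R by rewrite (ler_nat R 3).
rewrite /leaf_diag /leaf_offdiag natrB; last lia.
by field; apply/andP; split; apply: lt0r_neq0; lra.
Qed.

Lemma leaf_diag_neq_offdiag (R : realFieldType) n : (3 <= n)%N ->
  leaf_diag R n - leaf_offdiag R n != 0.
Proof.
move=> n3; have hn : 3 <= n%:R :> R by rewrite (ler_nat R 3).
have -> : leaf_diag R n - leaf_offdiag R n = (n%:R - 2) / (n%:R - 1).
  rewrite /leaf_diag /leaf_offdiag natrB; last lia.
  by field; apply/andP; split; apply: lt0r_neq0; lra.
by apply: mulf_neq0; rewrite ?invr_eq0 lt0r_neq0 //; lra.
Qed.

Section NullSpace.
Variables (R : realFieldType) (n : nat) (e : rel (vert n)) (lab : 'I_(n - 3) -> vert n * vert n).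
Hypotheses (n3 : (3 <= n)%N) (tree : is_nleaf_tree e).
Hypothesis lab_edge : forall k, e (lab k).1 (lab k).2.

Local Notation M := (shapley_matrix R e lab).
Local Notation W := (null_basis R e lab).

Lemma null_basis_orthogonal : W *m M^T = 0.
Proof.
apply/matrixP => k i; rewrite mxE [RHS]mxE big_split_ord /= (bigD1 k) //=.
rewrite [X in _ + (_ + X)]big1 => [|k' k'k]; last first.
  by rewrite null_basis_internal (negbTE k'k) mul0r.
rewrite null_basis_internal eqxx mul1r addr0 [M^T _ _]mxE shapley_matrix_internal.
have [A [A0 An splitA]] := tree_edge_split tree (lab_edge k).
set a := #|A| in A0 An splitA; set b := (n - a)%N in splitA.
have [ab ba nb b0] : [/\ (a + b)%N = n, (b + a)%N = n, (n - b)%N = a & (0 < b)%N].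
  by rewrite /b; split; lia.
have split_k l : split_c e (lab k) l = if l \in A then a else b.
  by rewrite [lab k]surjective_pairing splitA.
under eq_bigr => l _ do rewrite [M^T _ _]mxE (shapley_matrix_leaf _ _ tree) null_basis_leaf split_k
  (fun_if (fun c => null_coef R n c (n - c))) nb -/b.
rewrite sumr_diag_offdiag sumr_two_valued -/a -/b split_k.
case: (i \in A); rewrite ?nb -/b; first by have := null_coef_balance R A0 b0 ab n3; apply.
by rewrite [_ *+ a + _]addrC; have := null_coef_balance R b0 A0 ba n3; apply.
Qed.

Lemma rank_shapley_matrix : \rank M = n.
Proof.
apply/eqP/row_free_lsubmx; rewrite lsubmx_shapley_matrix // row_free_unit.
by rewrite scalar_add_const_unitmx ?leaf_diag_neq_offdiag ?leaf_block_row_sum ?oner_neq0.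
Qed.

End NullSpace.

Theorem theorem6 (R : realFieldType) (n : nat) (e : rel (vert n))
    (lab : 'I_(n - 3) -> vert n * vert n) :
  (3 <= n)%N -> is_nleaf_tree e -> is_internal_labeling e lab ->
  [/\ \rank (nullspace (shapley_matrix R e lab)) = (n - 3)%N,
      row_free (null_basis R e lab)
    & (null_basis R e lab == nullspace (shapley_matrix R e lab))%MS].
Proof.
move=> n3 tree [lab_internal _ _].
have lab_edge k : e (lab k).1 (lab k).2 by case/and3P: (lab_internal k).
have rank_null : \rank (nullspace (shapley_matrix R e lab)) = (n - 3)%N.
  by rewrite mxrank_ker mxrank_tr rank_shapley_matrix //; lia.
have free_W : row_free (null_basis R e lab).
  by apply: row_free_rsubmx; rewrite rsubmx_null_basis row_free_unit unitmx1.
have sub_W : (null_basis R e lab <= nullspace (shapley_matrix R e lab))%MS.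
  by rewrite sub_kermx null_basis_orthogonal.
split=> //; apply/andP; split=> //.
by have [_ <-] := mxrank_leqif_sup sub_W; rewrite rank_null (eqP free_W).
Qed.
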